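(* Let $R$ be a blind bisimulation on the nodes of a $\lambda$-graph $G$. Let $n,m$ be nodes with $n\,R\,m$ and $\tau$ a trace such that the path $n\xrightarrow{\tau}$ crosses an abstraction node $l$ and the path $m\xrightarrow{\tau}$ crosses an abstraction node $l'$. Then $l\,R\,l'$ holds if and only if $\mathrm{idx}(l,n\xrightarrow{\tau})=\mathrm{idx}(l',m\xrightarrow{\tau})$.
   Context: A pre-$\lambda$-graph is a directed graph whose nodes are of four kinds: an application node $@(n_1,n_2)$ has exactly two children, its left child $n_1$ and its right child $n_2$; an abstraction node $\lambda(n)$ has exactly one child, its body $n$; a free variable node has no children and carries an atom $\mathrm{id}(n)$ from a fixed set of atoms, distinct free variable nodes carrying distinct atoms; a bound variable node $\mathrm{var}(l)$ has exactly one outgoing binding edge, to an abstraction node $l$ (its binder). Letters $l,l'$ denote abstraction nodes. A trace is a finite sequence of directions from $\{\swarrow,\downarrow,\searrow\}$; $\epsilon$ is the empty trace and $d\cdot\tau$ is the trace $\tau$ extended by one final step $d$. Paths $n\xrightarrow{\tau}m$ are defined inductively: $n\xrightarrow{\epsilon}n$; if $n\xrightarrow{\tau}\lambda(m)$ then $n\xrightarrow{\downarrow\cdot\tau}m$; if $n\xrightarrow{\tau}@(m_1,m_2)$ then $n\xrightarrow{\swarrow\cdot\tau}m_1$ and $n\xrightarrow{\searrow\cdot\tau}m_2$ (binding edges are never followed). We write $n\xrightarrow{\tau}$ if $n\xrightarrow{\tau}m$ for some $m$. The path $n\xrightarrow{\tau}$ crosses a node $m$ if either $n\xrightarrow{\tau}m$,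 or $\tau=d\cdot\tau'$ and $n\xrightarrow{\tau'}$ crosses $m$. A root is a node $r$ such that the only path ending in $r$ has the empty trace. A node $m$ dominates $n$ if every path from a root to $n$ crosses $m$. A $\lambda$-graph is a pre-$\lambda$-graph that has finitely many nodes, is acyclic ($n\xrightarrow{\tau}n$ holds only for $\tau=\epsilon$), and is dominated (every bound variable node $\mathrm{var}(l)$ is dominated by its binder $l$). Two nodes are homogeneous if both are application nodes, or both abstraction nodes, or both free variable nodes, or both bound variable nodes; a binary relation $R$ on nodes is homogeneous if it only relates homogeneous nodes. Rules: $(\swarrow)$: $@(n_1,n_2)\,R\,@(m_1,m_2)$ implies $n_1\,R\,m_1$; $(\searrow)$: $@(n_1,n_2)\,R\,@(m_1,m_2)$ implies $n_2\,R\,m_2$; $(\downarrow)$: $\lambda(n)\,R\,\lambda(m)$ implies $n\,R\,m$. $R$ is propagated if closed under $(\swarrow),(\downarrow),(\searrow)$. A blind bisimulation is a homogeneous propagated relation. For a path $n\xrightarrow{\tau}$ crossing an abstraction node $l$, the index $\mathrm{idx}(l,n\xrightarrow{\tau})$ is defined by induction on the crossing: it is $0$ if $n\xrightarrow{\tau}l$; for $n\xrightarrow{d\cdot\tau}l'$ with $l'$ an abstraction node different from $l$ it is $\mathrm{idx}(l,n\xrightarrow{\tau})+1$; for $n\xrightarrow{d\cdot\tau}m$ with $m$ not an abstraction node it is $\mathrm{idx}(l,n\xrightarrow{\tau})$. *)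

From mathcomp Require Import all_boot.
Set Implicit Arguments. Unset Strict Implicit. Unset Printing Implicit Defensive.

Inductive node (A : Type) (V : Type) : Type :=
  | App of V & V
  | Abs of V
  | FVar of A
  | BVar of V.            (* var(l), binding edge to l *)
Arguments App {A V}. Arguments Abs {A V}. Arguments FVar {A V}. Arguments BVar {A V}.

(* Directions: Left = swarrow, Down = downarrow, Right = searrow. *)
Inductive dir := Left | Down | Right.

(* A trace d . tau is represented as the list  d :: tau  (head = last step). *)
Definition trace := seq dir.

Section Graph.
Variables (A : Type) (V : finType) (lab : V -> node A V).

Definition is_abs (v : V) : bool := if lab v is Abs _ then true else false.

Definition step (k : V) (d : dir) : option V :=
  match d, lab k with
  | Down, Abs b => Some b
  | Left, App a _ => Some a
  | Right, App _ b => Some b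
  | _, _ => None
  end.

Fixpoint walk (n : V) (t : trace) : option V :=
  match t with
  | [::] => Some n
  | d :: t' => if walk n t' is Some k then step k d else None
  end.

Definition path (n : V) (t : trace) (m : V) : Prop := walk n t = Some m.

Definition has_path (n : V) (t : trace) : Prop := exists m, path n t m.

Fixpoint crosses_aux (n : V) (t : trace) (m : V) : Prop :=
  path n t m \/ (if t is _ :: t' then crosses_aux n t' m else False).

Definition crosses (n : V) (t : trace) (m : V) : Prop :=
  has_path n t /\ crosses_aux n t m.

Definition is_root (r : V) : Prop := forall n t, path n t r -> t = [::].

Definition dominates (m n : V) : Prop :=
  forall r t, is_root r -> path r t n -> crosses r t m.

Definition pre_lambda_graph : Prop :=
  (forall v l, lab v = BVar l -> is_abs l) /\
  (forall v w (a b : A), lab v = FVar a -> lab w = FVar b -> v <> w -> a <> b).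

(* finiteness is given by V : finType *)
Definition lambda_graph : Prop :=
  [/\ pre_lambda_graph,
      (forall n t, path n t n -> t = [::]) &
      (forall v l, lab v = BVar l -> dominates l v)].

Definition homogeneous_nodes (n m : V) : Prop :=
  match lab n, lab m with
  | App _ _, App _ _ | Abs _, Abs _ | FVar _, FVar _ | BVar _, BVar _ => True
  | _, _ => False
  end.

Definition homogeneous (R : V -> V -> Prop) : Prop :=
  forall n m, R n m -> homogeneous_nodes n m.

Definition propagated (R : V -> V -> Prop) : Prop :=
  (forall n m n1 n2 m1 m2, R n m -> lab n = App n1 n2 -> lab m = App m1 m2 ->
     R n1 m1 /\ R n2 m2) /\
  (forall n m n' m', R n m -> lab n = Abs n' -> lab m = Abs m' -> R n' m').

Definition blind_bisimulation (R : V -> V -> Prop) : Prop :=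
  homogeneous R /\ propagated R.

(* idx(l, n --t-->), meaningful when the path crosses the abstraction l
   (default value 0 otherwise). *)
Fixpoint idx (l n : V) (t : trace) : nat :=
  match t with
  | [::] => 0
  | _ :: t' =>
      match walk n t with
      | Some k => if k == l then 0
                  else if is_abs k then (idx l n t').+1 else idx l n t'
      | None => 0
      end
  end.

End Graph.

From Pilot Require Import Defs.
From mathcomp Require Import all_boot.
Set Implicit Arguments. Unset Strict Implicit.

(* Traces are lists whose head is the LAST step, so [walk n (u ++ s)] first
   follows [s] and then [u].  The proof rests on three observations.
   1. A blind bisimulation R is preserved by walking: if R x y then, for every
      trace s, the walks from x and y along s are both undefined or end in
      R-related nodes (which are homogeneous, so both or neither are
      abstractions).  Hence the number [abs_count x u] of abstractions met
      along x --u--> equals [abs_count y u].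
   2. In an acyclic graph, once a path n --s--> reaches l it never returns to
      l, so idx(l, n --(u ++ s)-->) is exactly [abs_count l u].
   3. In a finite acyclic graph no node l admits a nonempty trace w whose
      "shift" preserves the domain of l (s is defined from l iff s ++ w is):
      iterating w would give arbitrarily long paths and thus a cycle.
   The main theorem splits both crossings at l and l'.  If they occur at the
   same position both sides of the equivalence hold (1, 2).  Otherwise, say l'
   comes after l by a nonempty w; then l' is R-related to the end of the
   path l --w-->, so R l l' would contradict 3, and the indices differ by the
   abstractions met along w, at least one (the last node, homogeneous to l'). *)

Lemma cat_eq_split (T : Type) (u1 s1 u2 s2 : seq T) :
  u1 ++ s1 = u2 ++ s2 -> size s1 <= size s2 ->
  exists w, u1 = u2 ++ w /\ s2 = w ++ s1.
Proof.
elim: u2 u1 => [|d u2 IH] u1 /=; first by move=> <- _; exists u1.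
case: u1 => [|d' u1] /= E.
  by rewrite E /= size_cat ltnNge leq_addl.
by case: E => -> /IH {}IH /IH [w [-> ->]]; exists w.
Qed.

Section LambdaGraphs.
Variables (A : Type) (V : finType) (lab : V -> node A V).

Local Notation walk := (walk lab).
Local Notation is_abs := (is_abs lab).

Lemma walk_cat (n : V) (u s : trace) :
  walk n (u ++ s) = if walk n s is Some k then walk k u else None.
Proof.
elim: u => [|d u IH] /=; first by case: (walk n s).
by rewrite IH; case: (walk n s).
Qed.

Lemma crosses_split (n : V) (t : trace) (m : V) :
  crosses_aux lab n t m -> exists u s, t = u ++ s /\ walk n s = Some m.
Proof.
elim: t => [|d t IH] /=; first by move=> [H|[]]; exists [::], [::].
move=> [H|/IH [u [s [-> Hs]]]]; first by exists [::], (d :: t).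
by exists (d :: u), s.
Qed.

Fixpoint abs_count (x : V) (u : trace) : nat :=
  match u with
  | [::] => 0
  | _ :: u' =>
      (if walk x u is Some k then is_abs k : nat else 0) + abs_count x u'
  end.

(* Unfolding equation of [abs_count] that keeps the walk along d :: u folded. *)
Lemma abs_count_cons (x : V) (d : dir) (u : trace) :
  abs_count x (d :: u) =
  (if walk x (d :: u) is Some k then is_abs k : nat else 0) + abs_count x u.
Proof. by []. Qed.

Lemma abs_count_cat (x y : V) (u w : trace) :
  walk x w = Some y -> abs_count x (u ++ w) = abs_count y u + abs_count x w.
Proof.
move=> Hw; elim: u => [|d u IH] //=.
by rewrite IH addnA walk_cat Hw.
Qed.

Section Acyclic.
Hypothesis acyclic : forall n t, Defs.path lab n t n -> t = [::].

(* Once a path reaches l it never returns to l, so the index of l counts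
   exactly the abstractions met after l. *)
Lemma idx_after_crossing (n l : V) (u s : trace) :
  walk n s = Some l -> walk l u <> None ->
  idx lab l n (u ++ s) = abs_count l u.
Proof.
move=> Hs; elim: u => [|d u IH] /=.
  by case: s Hs => [|d s] //= ->; rewrite eqxx.
rewrite walk_cat Hs; case E: (walk l u) IH => [k|] // IH Hd.
rewrite IH //; case E2: (step lab k d) Hd => [j|] // _.
case: eqP => [ej|_]; last by case: (is_abs j).
subst j; have cycle_at_l : Defs.path lab l (d :: u) l by rewrite /Defs.path /= E.
by have := acyclic cycle_at_l.
Qed.

Definition iter_trace (u : trace) (k : nat) : trace := flatten (nseq k u).

(* Walking a nonempty trace twice to the same node would close a cycle. *)
Lemma iter_trace_walk_inj (l x : V) (u : trace) (i j : nat) :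
  u <> [::] -> i < j ->
  walk l (iter_trace u i) = Some x -> walk l (iter_trace u j) = Some x -> False.
Proof.
move=> un ij Hi Hj.
have Ej : iter_trace u j = iter_trace u (j - i) ++ iter_trace u i.
  by rewrite /iter_trace -flatten_cat -nseqD subnK // ltnW.
rewrite Ej walk_cat Hi in Hj; have := acyclic Hj.
case Eji: (j - i) => [|k]; first by move: ij; rewrite -subn_gt0 Eji.
by rewrite /iter_trace /=; case: u un {Ej Hi Hj}.
Qed.

(* No node has a domain invariant under shifting by a nonempty trace w: the
   iterates of w would all be defined from l, and by pigeonhole two of the
   first #|V|.+1 of them would end in the same node. *)
Lemma no_shift_invariant_domain (l : V) (w : trace) :
  w <> [::] -> ~ (forall s, walk l s <> None <-> walk l (s ++ w) <> None).
Proof.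
move=> wn Hshift.
have Hdef k : walk l (iter_trace w k) <> None.
  elim: k => [|k IH] //.
  have -> : iter_trace w k.+1 = iter_trace w k ++ w.
    by rewrite /iter_trace -addn1 nseqD flatten_cat /= cats0.
  exact: (Hshift _).1 IH.
pose f (i : 'I_#|V|.+1) := odflt l (walk l (iter_trace w i)).
have /injectivePn [i [j nij Efij]] : ~~ injectiveb f.
  by apply/negP => /injectiveP /leq_card; rewrite card_ord ltnn.
have Hwalk k : walk l (iter_trace w k) = Some (odflt l (walk l (iter_trace w k))).
  by move: (Hdef k); case: walk.
case: (ltngtP i j) => [ij|ji|eij].
- by apply: (iter_trace_walk_inj wn ij (Hwalk i)); rewrite Hwalk; congr Some.
- by apply: (iter_trace_walk_inj wn ji (Hwalk j)); rewrite Hwalk; congr Some.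
- by move: nij; rewrite (val_inj eij) eqxx.
Qed.

End Acyclic.

Section BlindBisimulation.
Variable R : V -> V -> Prop.
Hypothesis bisim : blind_bisimulation lab R.

Definition orel (a b : option V) : Prop :=
  match a, b with
  | Some x, Some y => R x y
  | None, None => True
  | _, _ => False
  end.

Lemma is_abs_bisim (x y : V) : R x y -> is_abs x = is_abs y.
Proof.
move=> Rxy; have := bisim.1 _ _ Rxy.
by rewrite /homogeneous_nodes /is_abs; case: (lab x); case: (lab y).
Qed.

Lemma step_bisim (x y : V) (d : dir) : R x y -> orel (step lab x d) (step lab y d).
Proof.
case: bisim => hom [pApp pAbs] Rxy; have := hom _ _ Rxy.
rewrite /homogeneous_nodes /step.
case: d; case E1: (lab x) => [a1 a2|a1|a1|a1];
  case E2: (lab y) => [b1 b2|b1|b1|b1] //= _.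
- exact: (pApp _ _ _ _ _ _ Rxy E1 E2).1.
- exact: (pAbs _ _ _ _ Rxy E1 E2).
- exact: (pApp _ _ _ _ _ _ Rxy E1 E2).2.
Qed.

Lemma walk_bisim (x y : V) (s : trace) : R x y -> orel (walk x s) (walk y s).
Proof.
move=> Rxy; elim: s => [|d s IH] //=.
case: (walk x s) IH => [a|]; case: (walk y s) => [b|] //=; exact: step_bisim.
Qed.

Lemma walk_defined_bisim (x y : V) (s : trace) :
  R x y -> walk x s <> None <-> walk y s <> None.
Proof. by move/(walk_bisim s); case: (walk x s); case: (walk y s). Qed.

Lemma abs_count_bisim (x y : V) (u : trace) :
  R x y -> abs_count x u = abs_count y u.
Proof.
move=> Rxy; elim: u => [|d u IH] //; rewrite !abs_count_cons IH.
have := walk_bisim (d :: u) Rxy.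
case: (walk x (d :: u)) => [a|]; case: (walk y (d :: u)) => [b|] //= Rab.
by rewrite (is_abs_bisim Rab).
Qed.

End BlindBisimulation.

Lemma blind_bisimulation_converse (R : V -> V -> Prop) :
  blind_bisimulation lab R -> blind_bisimulation lab (fun x y => R y x).
Proof.
case=> hom [pApp pAbs]; split; [|split].
- move=> x y /hom; rewrite /homogeneous_nodes.
  by case: (lab x); case: (lab y).
- by move=> x y ? ? ? ? Rxy E1 E2; case: (pApp _ _ _ _ _ _ Rxy E2 E1).
- by move=> x y ? ? Rxy E1 E2; exact: (pAbs _ _ _ _ Rxy E2 E1).
Qed.

(* The theorem when the crossing of l' by m occurs at the same position as,
   or later than, the crossing of l by n: l is reached by s, l' by w ++ s.
   For w empty both sides hold; for w nonempty both fail. *)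
Lemma bisim_idx_ordered (R : V -> V -> Prop) (n m l l' : V) (u w s : trace) :
  lambda_graph lab -> blind_bisimulation lab R -> R n m ->
  walk n s = Some l -> walk m (w ++ s) = Some l' -> is_abs l' ->
  walk n (u ++ w ++ s) <> None ->
  (R l l' <-> idx lab l n (u ++ w ++ s) = idx lab l' m (u ++ w ++ s)).
Proof.
move=> [_ acyclic _] bisim Rnm Hl Hl' abs_l' Hdef.
have Hdef' : walk m (u ++ w ++ s) <> None.
  by apply/(walk_defined_bisim bisim _ Rnm).
have Hdef_l' : walk l' u <> None by move: Hdef'; rewrite walk_cat Hl'.
rewrite (idx_after_crossing acyclic Hl' Hdef_l').
have := walk_bisim bisim (w ++ s) Rnm; rewrite Hl'.
case Ea: (walk n (w ++ s)) => [a|] //= Ral'.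
have Hla : walk l w = Some a by rewrite walk_cat Hl in Ea.
rewrite catA (idx_after_crossing acyclic Hl); last first.
  by move: Hdef; rewrite catA walk_cat Hl.
rewrite (abs_count_cat _ Hla) (abs_count_bisim bisim _ Ral').
case: w Hla Ral' {Hl' Ea Hdef Hdef'} => [/= [<-] Rll'|d w Hla Ral'].
  by rewrite /= addn0; split.
have wn : d :: w <> [::] by [].
split => [Rll'|].
- exfalso; apply: (@no_shift_invariant_domain acyclic l _ wn) => s'.
  have def_l'_l := walk_defined_bisim bisim s' Rll'.
  have def_l'_a := walk_defined_bisim bisim s' Ral'.
  by rewrite walk_cat Hla; tauto.
- rewrite abs_count_cons Hla (is_abs_bisim bisim Ral') abs_l' => /eqP.
  by rewrite -[X in _ == X]addn0 eqn_add2l.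
Qed.

End LambdaGraphs.

Theorem mainTheorem18 (A : Type) (V : finType) (lab : V -> node A V)
    (R : V -> V -> Prop) (n m l l' : V) (t : trace) :
  lambda_graph lab ->
  blind_bisimulation lab R ->
  R n m ->
  is_abs lab l -> crosses lab n t l ->
  is_abs lab l' -> crosses lab m t l' ->
  (R l l' <-> idx lab l n t = idx lab l' m t).
Proof.
move=> lg bisim Rnm abs_l [[k Hk] cross_l] abs_l' [_ cross_l'].
have Hn : walk lab n t <> None by rewrite Hk.
have Hm : walk lab m t <> None by apply/(walk_defined_bisim bisim _ Rnm).
have [u1 [s1 [Et1 Hl]]] := crosses_split cross_l.
have [u2 [s2 [Et2 Hl']]] := crosses_split cross_l'.
have Et : u1 ++ s1 = u2 ++ s2 by rewrite -Et1 -Et2.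
case: (leqP (size s1) (size s2)) => [le12|/ltnW le21].
- have [w [Eu1 Es2]] := cat_eq_split Et le12; subst u1 s2.
  rewrite Et1 -catA in Hn *.
  exact: bisim_idx_ordered lg bisim Rnm Hl Hl' abs_l' Hn.
- have [w [Eu2 Es1]] := cat_eq_split (esym Et) le21; subst u2 s1.
  rewrite Et2 -catA in Hm *.
  have := bisim_idx_ordered lg (blind_bisimulation_converse bisim) Rnm Hl' Hl abs_l Hm.
  by move=> equiv; split=> [/equiv -> | /esym /equiv].
Qed.
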